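(* For every c.e. transitive relation $\prec$ on $\omega$ there is a computable strict partial order $\sqsubset$ on $\omega$ such that the spaces of ideals $\mathcal{I}(\prec)$ and $\mathcal{I}(\sqsubset)$ are computably homeomorphic.
   Context: For a transitive relation $\prec$ on a set $S$, an ideal is a set $I\subseteq S$ that is non-empty, a lower set ($b\prec a\in I$ implies $b\in I$), and directed (for all $a,b\in I$ there is $c\in I$ with $a\prec c$ and $b\prec c$). $\mathcal{I}(\prec)$ is the set of all ideals with the topology generated by the basic open sets $[n]_\prec=\{I\in\mathcal{I}(\prec)\mid n\in I\}$, $n\in S$; it is regarded as an effective space with these basic open sets numbered by $n$. An effective space is a pair $(X,\beta)$ with $X$ a countably based $T_0$ space and $\beta:\omega\to P(X)$ a numbering of a base such that $\beta(i)\cap\beta(j)=\bigcup\beta(A_{ij})$ for a uniformly c.e. family of sets $A_{ij}$. A function $f:(X,\beta)\to(Y,\gamma)$ is computable if there is a uniformly c.e. family $(B_n)$ with $f^{-1}(\gamma(n))=\bigcup\beta(B_n)$ for all $n$; a computable homeomorphism is a homeomorphism such that it and its inverse are computable. *)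

From Stdlib Require Import List Arith.
Import ListNotations.

Inductive prf : Type :=
| PZero : prf
| PSucc : prf
| PProj : nat -> prf
| PComp : prf -> list prf -> prf
| PPrim : prf -> prf -> prf
| PMu   : prf -> prf.

Inductive eval : prf -> list nat -> nat -> Prop :=
| ev_zero : forall v, eval PZero v 0
| ev_succ : forall x v, eval PSucc (x :: v) (S x)
| ev_proj : forall i v x, nth_error v i = Some x -> eval (PProj i) v x
| ev_comp : forall f gs v ys y,
    evals gs v ys -> eval f ys y -> eval (PComp f gs) v y
| ev_prim0 : forall f g v y, eval f v y -> eval (PPrim f g) (0 :: v) y
| ev_primS : forall f g n v z y,
    eval (PPrim f g) (n :: v) z -> eval g (n :: z :: v) y ->
    eval (PPrim f g) (S n :: v) y
| ev_mu : forall f v n,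
    eval f (n :: v) 0 ->
    (forall m, m < n -> exists k, eval f (m :: v) (S k)) ->
    eval (PMu f) v n
with evals : list prf -> list nat -> list nat -> Prop :=
| evs_nil : forall v, evals [] v []
| evs_cons : forall g gs v y ys,
    eval g v y -> evals gs v ys -> evals (g :: gs) v (y :: ys).

Definition halts (e : prf) (v : list nat) : Prop := exists y, eval e v y.

Definition ce_rel (R : nat -> nat -> Prop) : Prop :=
  exists e, forall a b, R a b <-> halts e [a; b].

Definition computable_rel (R : nat -> nat -> Prop) : Prop :=
  exists e, forall a b, (R a b -> eval e [a; b] 1) /\ (~ R a b -> eval e [a; b] 0).

Definition transitive_rel (R : nat -> nat -> Prop) : Prop :=
  forall a b c, R a b -> R b c -> R a c.

Definition strict_partial_order (R : nat -> nat -> Prop) : Prop :=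
  (forall a, ~ R a a) /\ transitive_rel R.

Definition is_ideal (R : nat -> nat -> Prop) (I : nat -> Prop) : Prop :=
  (exists a, I a) /\
  (forall a b, R b a -> I a -> I b) /\
  (forall a b, I a -> I b -> exists c, I c /\ R a c /\ R b c).

(* The space I(R): its points; the basic open [n]_R is {I | n \in I}. *)
Definition ideals (R : nat -> nat -> Prop) : Type := { I : nat -> Prop | is_ideal R I }.

(* f : (I(R), [.]_R) -> (I(S), [.]_S) is computable: there is a uniformly c.e.
   family (B_n) (B_n = {m | e halts on [n; m]}) with
   f^{-1}([n]_S) = \bigcup_{m \in B_n} [m]_R. *)
Definition computable_map {R S : nat -> nat -> Prop} (f : ideals R -> ideals S) : Prop :=
  exists e, forall (n : nat) (I : ideals R),
    proj1_sig (f I) n <-> exists m, halts e [n; m] /\ proj1_sig I m.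

(* Computable homeomorphism: a bijection which, together with its inverse, is
   computable (computable maps are continuous, so this is a homeomorphism). *)
Definition computably_homeomorphic (R S : nat -> nat -> Prop) : Prop :=
  exists (f : ideals R -> ideals S) (g : ideals S -> ideals R),
    (forall x, g (f x) = x) /\ (forall y, f (g y) = y) /\
    computable_map f /\ computable_map g.

(* Let [e] enumerate [prec] and let [label] be a computable function taking
   every value at arbitrarily large arguments.  Put [x ⊏ y] iff [x < y] and
   there is a chain [x = w_0 < w_1 < ... < w_k = y] along which each
   [label w_i ≺ label w_(i+1)] is confirmed by running [e] for at most [y]
   steps.  The step bound makes [⊏] decidable, chains make it transitive, and
   it refines [<], so it is a strict order.  Every instance of [≺] is
   confirmed at some stage and every label recurs beyond that stage, so an
   ideal of [⊏] contains every [x] whose label precedes one of its labels;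
   hence [I ↦ label⁻¹(I)] and [J ↦ label(J)] are inverse bijections between
   the ideals, and both are computable because the basic opens are pulled back
   along the decidable graph of [label].  To decide [⊏] by a Kleene program we
   use that step-bounded evaluation is primitive recursive, and we compute the
   positions reachable by chains as the binary digits of a number. *)

From Stdlib Require Import List Arith Lia PeanoNat.
From Stdlib Require Import FunctionalExtensionality PropExtensionality ProofIrrelevance.
Import ListNotations.

(** * Programming with total programs *)

Definition computes (p : prf) (k : nat) (P : list nat -> nat) : Prop :=
  forall v, length v = k -> eval p v (P v).

Lemma computes_ext p k P Q : computes p k P ->
  (forall v, length v = k -> P v = Q v) -> computes p k Q.
Proof. intros H E v Hv. rewrite <- E by exact Hv. apply H, Hv. Qed.

Lemma computes_zero k : computes PZero k (fun _ => 0).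
Proof. intros v _. constructor. Qed.

Lemma computes_proj i k : i < k -> computes (PProj i) k (fun v => nth i v 0).
Proof. intros Hi v Hv. constructor. apply nth_error_nth'. lia. Qed.

Lemma computes_evals gs Gs k v : Forall2 (fun g G => computes g k G) gs Gs ->
  length v = k -> evals gs v (map (fun G => G v) Gs).
Proof. intros H Hv. induction H; simpl; constructor; auto. Qed.

Lemma computes_comp f gs k m F Gs : Forall2 (fun g G => computes g k G) gs Gs ->
  length gs = m -> computes f m F ->
  computes (PComp f gs) k (fun v => F (map (fun G => G v) Gs)).
Proof.
  intros H Hl Hf v Hv. econstructor.
  - apply (computes_evals _ Gs k); eauto.
  - apply Hf. rewrite length_map, <- (Forall2_length H). auto.
Qed.

Fixpoint primrec (B G : list nat -> nat) (n : nat) (w : list nat) : nat :=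
  match n with 0 => B w | S m => G (m :: primrec B G m w :: w) end.

Lemma primrec_ext B1 B2 G1 G2 n w : (forall u, B1 u = B2 u) -> (forall u, G1 u = G2 u) ->
  primrec B1 G1 n w = primrec B2 G2 n w.
Proof. intros HB HG. induction n; simpl; auto. rewrite IHn. auto. Qed.

Lemma computes_prim f g k F G : computes f k F -> computes g (S (S k)) G ->
  computes (PPrim f g) (S k) (fun v => primrec F G (hd 0 v) (tl v)).
Proof.
  intros Hf Hg [|n w] Hv; simpl in Hv; [discriminate|].
  injection Hv as Hv. simpl. induction n; simpl.
  - constructor. apply Hf, Hv.
  - econstructor. exact IHn. apply Hg. simpl. lia.
Qed.

Lemma computes_succ p k P : computes p k P -> computes (PComp PSucc [p]) k (fun v => S (P v)).
Proof. intros H v Hv. econstructor; repeat constructor. apply H, Hv. Qed.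

Fixpoint cst n := match n with 0 => PZero | S m => PComp PSucc [cst m] end.

Lemma computes_cst n k : computes (cst n) k (fun _ => n).
Proof. induction n; simpl. apply computes_zero. apply (computes_succ _ _ _ IHn). Qed.

Ltac split_forall2 := repeat (apply Forall2_cons || apply Forall2_nil).

Lemma computes_app1 OP (op : nat -> nat) p k P :
  computes OP 1 (fun v => op (nth 0 v 0)) -> computes p k P ->
  computes (PComp OP [p]) k (fun v => op (P v)).
Proof.
  intros HO Hp. eapply computes_ext.
  - eapply computes_comp with (Gs := [P]); [split_forall2; auto | reflexivity | exact HO].
  - reflexivity.
Qed.

Lemma computes_app2 OP (op : nat -> nat -> nat) p q k P Q :
  computes OP 2 (fun v => op (nth 0 v 0) (nth 1 v 0)) -> computes p k P -> computes q k Q ->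
  computes (PComp OP [p; q]) k (fun v => op (P v) (Q v)).
Proof.
  intros HO Hp Hq. eapply computes_ext.
  - eapply computes_comp with (Gs := [P; Q]); [split_forall2; auto | reflexivity | exact HO].
  - reflexivity.
Qed.

Lemma computes_app3 OP (op : nat -> nat -> nat -> nat) p q r k P Q R :
  computes OP 3 (fun v => op (nth 0 v 0) (nth 1 v 0) (nth 2 v 0)) ->
  computes p k P -> computes q k Q -> computes r k R ->
  computes (PComp OP [p; q; r]) k (fun v => op (P v) (Q v) (R v)).
Proof.
  intros HO Hp Hq Hr. eapply computes_ext.
  - eapply computes_comp with (Gs := [P; Q; R]); [split_forall2; auto | reflexivity | exact HO].
  - reflexivity.
Qed.

Ltac destruct_arg v Hv :=
  destruct v as [|? v]; simpl in Hv; try discriminate; injection Hv as Hv.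

Definition ADD := PPrim (PProj 0) (PComp PSucc [PProj 1]).
Lemma ADD_spec : computes ADD 2 (fun v => nth 0 v 0 + nth 1 v 0).
Proof.
  eapply computes_ext.
  - apply computes_prim; [|apply computes_succ]; apply computes_proj; lia.
  - intros v Hv. destruct_arg v Hv. destruct_arg v Hv. destruct v; [|discriminate].
    simpl. induction n; simpl; auto.
Qed.
Lemma computes_add p q k P Q : computes p k P -> computes q k Q ->
  computes (PComp ADD [p; q]) k (fun v => P v + Q v).
Proof. apply (computes_app2 _ Nat.add), ADD_spec. Qed.

Definition MUL := PPrim PZero (PComp ADD [PProj 1; PProj 2]).
Lemma MUL_spec : computes MUL 2 (fun v => nth 0 v 0 * nth 1 v 0).
Proof.
  eapply computes_ext.
  - apply computes_prim; [apply computes_zero|]. apply computes_add; apply computes_proj; lia.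
  - intros v Hv. destruct_arg v Hv. destruct_arg v Hv. destruct v; [|discriminate].
    simpl. induction n; simpl; auto. rewrite IHn. lia.
Qed.
Lemma computes_mul p q k P Q : computes p k P -> computes q k Q ->
  computes (PComp MUL [p; q]) k (fun v => P v * Q v).
Proof. apply (computes_app2 _ Nat.mul), MUL_spec. Qed.

Definition PRED := PPrim PZero (PProj 0).
Lemma PRED_spec : computes PRED 1 (fun v => pred (nth 0 v 0)).
Proof.
  eapply computes_ext.
  - apply computes_prim; [apply computes_zero | apply computes_proj; lia].
  - intros v Hv. destruct_arg v Hv. destruct v; [|discriminate]. destruct n; reflexivity.
Qed.
Lemma computes_pred p k P : computes p k P -> computes (PComp PRED [p]) k (fun v => pred (P v)).
Proof. apply (computes_app1 _ pred), PRED_spec. Qed.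

Definition SUBR := PPrim (PProj 0) (PComp PRED [PProj 1]).
Definition MONUS := PComp SUBR [PProj 1; PProj 0].
Lemma MONUS_spec : computes MONUS 2 (fun v => nth 0 v 0 - nth 1 v 0).
Proof.
  assert (Hsubr : computes SUBR 2 (fun v => nth 1 v 0 - nth 0 v 0)).
  { eapply computes_ext.
    - apply computes_prim; [|apply computes_pred]; apply computes_proj; lia.
    - intros v Hv. destruct_arg v Hv. destruct_arg v Hv. destruct v; [|discriminate].
      simpl. induction n; simpl; [lia|]. rewrite IHn. lia. }
  apply (computes_app2 _ (fun a b => b - a)); auto; apply computes_proj; lia.
Qed.
Lemma computes_sub p q k P Q : computes p k P -> computes q k Q ->
  computes (PComp MONUS [p; q]) k (fun v => P v - Q v).
Proof. apply (computes_app2 _ Nat.sub), MONUS_spec. Qed.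

Definition sg (n : nat) := match n with 0 => 0 | S _ => 1 end.
Definition nsg (n : nat) := match n with 0 => 1 | S _ => 0 end.

Lemma sg_01 n : sg n = 0 \/ sg n = 1.
Proof. destruct n; simpl; auto. Qed.

Lemma sg_1 n : sg n = 1 <-> n <> 0.
Proof. destruct n; simpl; split; intros; auto; lia. Qed.

Definition SG := PPrim PZero (cst 1).
Lemma SG_spec : computes SG 1 (fun v => sg (nth 0 v 0)).
Proof.
  eapply computes_ext.
  - apply computes_prim; [apply computes_zero | apply computes_cst].
  - intros v Hv. destruct_arg v Hv. destruct v; [|discriminate]. destruct n; reflexivity.
Qed.
Lemma computes_sg p k P : computes p k P -> computes (PComp SG [p]) k (fun v => sg (P v)).
Proof. apply (computes_app1 _ sg), SG_spec. Qed.

Definition NSG := PPrim (cst 1) PZero.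
Lemma NSG_spec : computes NSG 1 (fun v => nsg (nth 0 v 0)).
Proof.
  eapply computes_ext.
  - apply computes_prim; [apply computes_cst | apply computes_zero].
  - intros v Hv. destruct_arg v Hv. destruct v; [|discriminate]. destruct n; reflexivity.
Qed.
Lemma computes_nsg p k P : computes p k P -> computes (PComp NSG [p]) k (fun v => nsg (P v)).
Proof. apply (computes_app1 _ nsg), NSG_spec. Qed.

Definition b2n (b : bool) := if b then 1 else 0.

Definition LTB := PComp SG [PComp MONUS [PProj 1; PProj 0]].
Lemma LTB_spec : computes LTB 2 (fun v => b2n (nth 0 v 0 <? nth 1 v 0)).
Proof.
  eapply computes_ext.
  - apply computes_sg, computes_sub; apply computes_proj; lia.
  - intros v _. destruct (Nat.ltb_spec (nth 0 v 0) (nth 1 v 0));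
      destruct (nth 1 v 0 - nth 0 v 0) eqn:E; simpl; lia.
Qed.
Lemma computes_ltb p q k P Q : computes p k P -> computes q k Q ->
  computes (PComp LTB [p; q]) k (fun v => b2n (P v <? Q v)).
Proof. apply (computes_app2 _ (fun a b => b2n (a <? b))), LTB_spec. Qed.

Definition EQB :=
  PComp NSG [PComp ADD [PComp MONUS [PProj 1; PProj 0]; PComp MONUS [PProj 0; PProj 1]]].
Lemma EQB_spec : computes EQB 2 (fun v => b2n (nth 0 v 0 =? nth 1 v 0)).
Proof.
  eapply computes_ext.
  - apply computes_nsg, computes_add; apply computes_sub; apply computes_proj; lia.
  - intros v _. destruct (Nat.eqb_spec (nth 0 v 0) (nth 1 v 0));
      destruct (nth 1 v 0 - nth 0 v 0 + (nth 0 v 0 - nth 1 v 0)) eqn:E; simpl; lia.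
Qed.
Lemma computes_eqb p q k P Q : computes p k P -> computes q k Q ->
  computes (PComp EQB [p; q]) k (fun v => b2n (P v =? Q v)).
Proof. apply (computes_app2 _ (fun a b => b2n (a =? b))), EQB_spec. Qed.

Definition POW2 := PPrim (cst 1) (PComp ADD [PProj 1; PProj 1]).
Lemma POW2_spec : computes POW2 1 (fun v => 2 ^ nth 0 v 0).
Proof.
  eapply computes_ext.
  - apply computes_prim; [apply computes_cst|]. apply computes_add; apply computes_proj; lia.
  - intros v Hv. destruct_arg v Hv. destruct v; [|discriminate].
    simpl. induction n; simpl; auto. rewrite IHn. lia.
Qed.
Lemma computes_pow2 p k P : computes p k P -> computes (PComp POW2 [p]) k (fun v => 2 ^ P v).
Proof. apply (computes_app1 _ (fun a => 2 ^ a)), POW2_spec. Qed.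

Lemma div2_mod2_succ n : S n / 2 = n / 2 + n mod 2 /\ S n mod 2 = nsg (n mod 2).
Proof.
  pose proof (Nat.div_mod n 2 ltac:(lia)). pose proof (Nat.mod_upper_bound n 2 ltac:(lia)).
  destruct (n mod 2) as [|[|]] eqn:E; [| |lia]; unfold nsg; split; symmetry.
  - rewrite Nat.add_0_r. apply (Nat.div_unique _ _ _ 1); lia.
  - apply (Nat.mod_unique _ _ (n / 2)); lia.
  - apply (Nat.div_unique _ _ _ 0); lia.
  - apply (Nat.mod_unique _ _ (n / 2 + 1)); lia.
Qed.

Definition PAR := PPrim PZero (PComp NSG [PProj 1]).
Lemma PAR_spec : computes PAR 1 (fun v => nth 0 v 0 mod 2).
Proof.
  eapply computes_ext.
  - apply computes_prim; [apply computes_zero|]. apply computes_nsg, computes_proj; lia.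
  - intros v Hv. destruct_arg v Hv. destruct v; [|discriminate].
    simpl. induction n; simpl; auto. rewrite IHn. symmetry. apply div2_mod2_succ.
Qed.
Lemma computes_mod2 p k P : computes p k P -> computes (PComp PAR [p]) k (fun v => P v mod 2).
Proof. apply (computes_app1 _ (fun a => a mod 2)), PAR_spec. Qed.

Definition HALF := PPrim PZero (PComp ADD [PProj 1; PComp PAR [PProj 0]]).
Lemma HALF_spec : computes HALF 1 (fun v => nth 0 v 0 / 2).
Proof.
  eapply computes_ext.
  - apply computes_prim; [apply computes_zero|].
    apply computes_add; [|apply computes_mod2]; apply computes_proj; lia.
  - intros v Hv. destruct_arg v Hv. destruct v; [|discriminate].
    simpl. induction n; simpl; auto. rewrite IHn. symmetry. apply div2_mod2_succ.
Qed.
Lemma computes_div2 p k P : computes p k P -> computes (PComp HALF [p]) k (fun v => P v / 2).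
Proof. apply (computes_app1 _ (fun a => a / 2)), HALF_spec. Qed.

Definition SHIFT := PPrim (PProj 0) (PComp HALF [PProj 1]).
Lemma SHIFT_spec : computes SHIFT 2 (fun v => nth 1 v 0 / 2 ^ nth 0 v 0).
Proof.
  eapply computes_ext.
  - apply computes_prim; [|apply computes_div2]; apply computes_proj; lia.
  - intros v Hv. destruct_arg v Hv. destruct_arg v Hv. destruct v; [|discriminate].
    cbn [hd tl nth]. induction n; cbn [primrec nth].
    + rewrite Nat.pow_0_r, Nat.div_1_r; auto.
    + rewrite IHn, Nat.Div0.div_div, Nat.pow_succ_r'. f_equal. lia.
Qed.

Definition bit H w := (H / 2 ^ w) mod 2.

Definition BIT := PComp PAR [PComp SHIFT [PProj 1; PProj 0]].
Lemma BIT_spec : computes BIT 2 (fun v => bit (nth 0 v 0) (nth 1 v 0)).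
Proof.
  apply computes_mod2, (computes_app2 _ (fun a b => b / 2 ^ a)); [apply SHIFT_spec | |];
    apply computes_proj; lia.
Qed.
Lemma computes_bit p q k P Q : computes p k P -> computes q k Q ->
  computes (PComp BIT [p; q]) k (fun v => bit (P v) (Q v)).
Proof. apply (computes_app2 _ bit), BIT_spec. Qed.

Definition projs i c := map PProj (seq i c).

Lemma length_projs i c : length (projs i c) = c.
Proof. unfold projs. rewrite length_map, length_seq. reflexivity. Qed.

Definition nths (u : list nat) i c := map (fun j => nth j u 0) (seq i c).

Lemma computes_projs i c k : i + c <= k ->
  Forall2 (fun g G => computes g k G) (projs i c) (map (fun j (v : list nat) => nth j v 0) (seq i c)).
Proof.
  revert i. induction c; intros i Hi; simpl; constructor.
  - apply computes_proj; lia.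
  - apply IHc; lia.
Qed.

Lemma map_projs_eval i c (v : list nat) :
  map (fun G => G v) (map (fun j (v : list nat) => nth j v 0) (seq i c)) = nths v i c.
Proof. unfold nths. rewrite map_map. reflexivity. Qed.

Lemma nths_cons u a i c : nths (a :: u) (S i) c = nths u i c.
Proof. unfold nths. rewrite <- seq_shift, map_map. reflexivity. Qed.

Lemma nths_all u : nths u 0 (length u) = u.
Proof.
  induction u as [|a u IH]; [reflexivity|].
  change (a :: nths (a :: u) 1 (length u) = a :: u).
  rewrite nths_cons, IH. reflexivity.
Qed.

Fixpoint bsum (f : nat -> nat) n := match n with 0 => 0 | S m => bsum f m + f m end.

Lemma bsum_neq0 f n : bsum f n <> 0 <-> exists i, i < n /\ f i <> 0.
Proof.
  induction n; simpl.
  - split; [lia | intros (i & Hi & _); lia].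
  - split.
    + intros H. destruct (f n) eqn:E.
      * rewrite Nat.add_0_r in H. destruct (proj1 IHn H) as (i & ? & ?). exists i. auto.
      * exists n. split; lia.
    + intros (i & Hi & Hf). destruct (Nat.eq_dec i n); [subst; lia|].
      assert (bsum f n <> 0) by (apply IHn; exists i; split; auto; lia). lia.
Qed.

Definition BSUM h k := PPrim PZero (PComp ADD [PProj 1; PComp h (PProj 0 :: projs 2 k)]).
Lemma BSUM_spec h k Hh : computes h (S k) Hh ->
  computes (BSUM h k) (S k) (fun v => bsum (fun i => Hh (i :: tl v)) (hd 0 v)).
Proof.
  intros Hc. eapply computes_ext.
  - apply computes_prim; [apply computes_zero|]. apply computes_add; [apply computes_proj; lia|].
    eapply computes_comp; [| | exact Hc].
    + constructor; [apply computes_proj; lia | apply computes_projs; lia].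
    + simpl. rewrite length_projs. reflexivity.
  - intros [|n ctx] Hv; simpl in Hv; [discriminate|]. injection Hv as Hv.
    cbn [hd tl]. induction n; cbn [primrec bsum]; auto. rewrite IHn. f_equal.
    cbn [map nth]. rewrite map_projs_eval. subst k. rewrite !nths_cons, nths_all. reflexivity.
Qed.

(** * Step-bounded evaluation is primitive recursive *)

Fixpoint prf_nested_ind (P : prf -> Prop) (H0 : P PZero) (H1 : P PSucc)
  (H2 : forall i, P (PProj i))
  (H3 : forall f gs, P f -> Forall P gs -> P (PComp f gs))
  (H4 : forall f g, P f -> P g -> P (PPrim f g)) (H5 : forall f, P f -> P (PMu f))
  (e : prf) : P e :=
  let IH := prf_nested_ind P H0 H1 H2 H3 H4 H5 in
  match e with
  | PZero => H0 | PSucc => H1 | PProj i => H2 i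
  | PComp f gs => H3 f gs (IH f)
      ((fix go (l : list prf) : Forall P l :=
          match l with [] => Forall_nil _ | g :: l' => Forall_cons _ (IH g) (go l') end) gs)
  | PPrim f g => H4 f g (IH f) (IH g)
  | PMu f => H5 f (IH f)
  end.

Definition all_pos (l : list nat) := fold_right (fun r acc => sg r * acc) 1 l.

(* The state of an unbounded search: [0] while still searching, [1] once the
   searched function was undefined at some argument, [j + 2] once [j] is found. *)
Definition mu_step (z j s : nat) := z + nsg z * (nsg s + sg s * nsg (pred s) * S (S j)).

(* [beval e k t v] is [S y] if [e] yields [y] on the [k] arguments [v] with all
   unbounded searches cut off below [t], and [0] otherwise.  The arity [k] is
   passed explicitly so that the compiled program below has a fixed arity. *)
Fixpoint beval (e : prf) (k t : nat) (v : list nat) {struct e} : nat :=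
  match e with
  | PZero => 1
  | PSucc => match k with 0 => 0 | S _ => S (S (hd 0 v)) end
  | PProj i => if i <? k then S (nth i v 0) else 0
  | PComp f gs => all_pos (map (fun g => beval g k t v) gs) *
                  beval f (length gs) t (map (fun g => pred (beval g k t v)) gs)
  | PPrim f g => match k with 0 => 0 | S k' =>
       primrec (fun u => beval f k' (hd 0 u) (tl u))
               (fun u => sg (nth 1 u 0) * beval g (S (S k')) (nth 2 u 0)
                          (nth 0 u 0 :: pred (nth 1 u 0) :: nths u 3 k'))
               (hd 0 v) (t :: tl v) end
  | PMu f => pred (primrec (fun _ => 0)
               (fun u => mu_step (nth 1 u 0) (nth 0 u 0)
                          (beval f (S k) (nth 2 u 0) (nth 0 u 0 :: nths u 3 k)))
               t (t :: v))
  end.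

Definition ALL_POS (l : list prf) : prf :=
  fold_right (fun c acc => PComp MUL [PComp SG [c]; acc]) (cst 1) l.

Definition MU_STEP (zp jp sp : prf) : prf :=
  PComp ADD [zp; PComp MUL [PComp NSG [zp];
     PComp ADD [PComp NSG [sp]; PComp MUL [PComp MUL [PComp SG [sp]; PComp NSG [PComp PRED [sp]]];
                                           PComp PSucc [PComp PSucc [jp]]]]]].

Fixpoint beval_prf (e : prf) (k : nat) {struct e} : prf :=
  match e with
  | PZero => cst 1
  | PSucc => match k with 0 => PZero | S _ => PComp PSucc [PComp PSucc [PProj 1]] end
  | PProj i => if i <? k then PComp PSucc [PProj (S i)] else PZero
  | PComp f gs => PComp MUL [ALL_POS (map (fun g => beval_prf g k) gs);
                             PComp (beval_prf f (length gs))
                                   (PProj 0 :: map (fun g => PComp PRED [beval_prf g k]) gs)]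
  | PPrim f g => match k with 0 => PZero | S k' =>
      PComp (PPrim (beval_prf f k')
                   (PComp MUL [PComp SG [PProj 1];
                               PComp (beval_prf g (S (S k')))
                                     (PProj 2 :: PProj 0 :: PComp PRED [PProj 1] :: projs 3 k')]))
            (PProj 1 :: PProj 0 :: projs 2 k') end
  | PMu f => PComp PRED [PComp (PPrim PZero
                   (MU_STEP (PProj 1) (PProj 0)
                            (PComp (beval_prf f (S k)) (PProj 2 :: PProj 0 :: projs 3 k))))
                   (PProj 0 :: PProj 0 :: projs 1 k)]
  end.

Definition compiles (e : prf) : Prop :=
  forall k, computes (beval_prf e k) (S k) (fun u => beval e k (hd 0 u) (tl u)).

Lemma computes_all_pos ps Ps k : Forall2 (fun p P => computes p k P) ps Ps ->
  computes (ALL_POS ps) k (fun v => all_pos (map (fun P => P v) Ps)).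
Proof.
  induction 1; simpl.
  - apply (computes_cst 1).
  - apply computes_mul; [apply computes_sg|]; auto.
Qed.

Lemma compiles_comp f gs : compiles f -> Forall compiles gs -> compiles (PComp f gs).
Proof.
  intros IHf IHgs k.
  set (Gs := map (fun g u => beval g k (hd 0 u) (tl u)) gs).
  assert (HGs : Forall2 (fun p P => computes p (S k) P) (map (fun g => beval_prf g k) gs) Gs).
  { subst Gs. induction IHgs; simpl; constructor; auto. }
  eapply computes_ext; [apply computes_mul|].
  - apply computes_all_pos, HGs.
  - eapply computes_comp
      with (Gs := (fun u => hd 0 u) :: map (fun G u => pred (G u)) Gs); [| |apply IHf].
    + constructor.
      * eapply computes_ext; [apply computes_proj; lia|].
        intros [|a v] Hv; [discriminate | reflexivity].
      * subst Gs. clear HGs. induction IHgs; simpl; constructor; auto. apply computes_pred, H.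
    + simpl. subst Gs. rewrite !length_map. reflexivity.
  - intros v _. subst Gs. simpl. rewrite !map_map. reflexivity.
Qed.

Lemma compiles_prim f g : compiles f -> compiles g -> compiles (PPrim f g).
Proof.
  intros IHf IHg [|k']; simpl.
  - apply computes_zero.
  - eapply computes_ext; [eapply computes_comp; [| |apply computes_prim]|].
    + constructor; [apply computes_proj; lia|].
      constructor; [apply computes_proj; lia | apply computes_projs; lia].
    + simpl. rewrite length_projs. reflexivity.
    + apply IHf.
    + apply computes_mul; [apply computes_sg, computes_proj; lia|].
      eapply computes_comp; [| |apply IHg].
      * constructor; [apply computes_proj; lia|]. constructor; [apply computes_proj; lia|].
        constructor; [apply computes_pred, computes_proj; lia | apply computes_projs; lia].
      * simpl. rewrite length_projs. reflexivity.
    + intros [|t [|n w]] Hv; simpl in Hv; try lia. injection Hv as Hv.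
      cbn [map hd tl]. rewrite map_projs_eval. subst k'.
      rewrite !nths_cons, nths_all. cbn [hd tl]. apply primrec_ext; intros u; auto.
      cbn [map hd tl]. rewrite map_projs_eval. reflexivity.
Qed.

Lemma compiles_mu f : compiles f -> compiles (PMu f).
Proof.
  intros IHf k.
  assert (Hf : computes (PComp (beval_prf f (S k)) (PProj 2 :: PProj 0 :: projs 3 k)) (S (S (S k)))
                 (fun u => beval f (S k) (nth 2 u 0) (nth 0 u 0 :: nths u 3 k))).
  { eapply computes_ext; [eapply computes_comp; [| |apply IHf]|].
    - constructor; [apply computes_proj; lia|].
      constructor; [apply computes_proj; lia | apply computes_projs; lia].
    - simpl. rewrite length_projs. reflexivity.
    - intros u _. cbn [map hd tl]. rewrite map_projs_eval. reflexivity. }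
  simpl. eapply computes_ext; [apply computes_pred; eapply computes_comp|].
  - constructor; [apply computes_proj; lia|].
    constructor; [apply computes_proj; lia | apply computes_projs; lia].
  - simpl. rewrite length_projs. reflexivity.
  - apply computes_prim; [apply computes_zero|]. unfold MU_STEP.
    apply computes_add; [apply computes_proj; lia|].
    apply computes_mul; [apply computes_nsg, computes_proj; lia|].
    apply computes_add; [apply computes_nsg, Hf|].
    apply computes_mul; [apply computes_mul|].
    + apply computes_sg, Hf.
    + apply computes_nsg, computes_pred, Hf.
    + apply computes_succ, computes_succ, computes_proj; lia.
  - intros [|t v] Hv; simpl in Hv; try lia. injection Hv as Hv.
    cbn [map hd tl]. rewrite map_projs_eval. subst k. rewrite nths_cons, nths_all.
    reflexivity.
Qed.

Lemma beval_prf_spec e : compiles e.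
Proof.
  induction e using prf_nested_ind.
  - intros k. apply computes_cst.
  - intros [|k]; simpl.
    + apply computes_zero.
    + eapply computes_ext; [apply computes_succ, computes_succ, computes_proj; lia|].
      intros [|a [|b v]] Hv; simpl in *; try lia; reflexivity.
  - intros k. simpl. destruct (Nat.ltb_spec i k).
    + eapply computes_ext; [apply computes_succ, computes_proj; lia|].
      intros [|a v] Hv; simpl in *; [lia | reflexivity].
    + apply computes_zero.
  - apply compiles_comp; auto.
  - apply compiles_prim; auto.
  - apply compiles_mu; auto.
Qed.

Lemma beval_prim_0 f g k' t w : beval (PPrim f g) (S k') t (0 :: w) = beval f k' t w.
Proof. reflexivity. Qed.

Lemma beval_prim_S f g k' t m w : length w = k' ->
  beval (PPrim f g) (S k') t (S m :: w) =
  sg (beval (PPrim f g) (S k') t (m :: w)) *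
  beval g (S (S k')) t (m :: pred (beval (PPrim f g) (S k') t (m :: w)) :: w).
Proof. intros Hw. cbn [beval primrec hd tl nth]. rewrite <- Hw, !nths_cons, nths_all. reflexivity. Qed.

Definition mu_search f k t v j := primrec (fun _ => 0)
  (fun u => mu_step (nth 1 u 0) (nth 0 u 0) (beval f (S k) (nth 2 u 0) (nth 0 u 0 :: nths u 3 k)))
  j (t :: v).

Lemma beval_mu f k t v : beval (PMu f) k t v = pred (mu_search f k t v t).
Proof. reflexivity. Qed.

Lemma mu_search_S f k t v j : length v = k ->
  mu_search f k t v (S j) = mu_step (mu_search f k t v j) j (beval f (S k) t (j :: v)).
Proof. intros Hv. unfold mu_search. cbn [primrec nth]. rewrite <- Hv, !nths_cons, nths_all. reflexivity. Qed.

Lemma mu_search_spec f k t v : length v = k -> forall j,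
  (mu_search f k t v j = 0 ->
     forall m, m < j -> exists q, beval f (S k) t (m :: v) = S (S q)) /\
  (forall y, mu_search f k t v j = S (S y) ->
     y < j /\ beval f (S k) t (y :: v) = 1 /\
     forall m, m < y -> exists q, beval f (S k) t (m :: v) = S (S q)).
Proof.
  intros Hv. induction j as [|j [IH0 IHS]].
  - split; [intros _ m Hm; lia | intros y H; discriminate].
  - rewrite mu_search_S by auto. unfold mu_step.
    destruct (mu_search f k t v j) as [|z].
    + specialize (IH0 eq_refl).
      destruct (beval f (S k) t (j :: v)) as [|[|q]] eqn:Es; simpl.
      * split; intros; discriminate.
      * split; [intros; discriminate|]. intros y Hy. replace y with j by lia.
        repeat split; auto.
      * split; [|intros; discriminate]. intros _ m Hm.
        destruct (Nat.eq_dec m j); [subst; eauto | apply IH0; lia].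
    + simpl. rewrite Nat.add_0_r. split; [intros; discriminate|].
      intros y Hy. destruct (IHS y Hy) as [A B]. split; [lia | exact B].
Qed.

Lemma all_pos_01 l : all_pos l = 0 \/ all_pos l = 1.
Proof. induction l as [|a l IH]; simpl; auto. destruct a; simpl; lia. Qed.

Lemma all_pos_map_S l : all_pos (map S l) = 1.
Proof. induction l as [|a l IH]; simpl; auto. rewrite IH. reflexivity. Qed.

Definition beval_sound_at (e : prf) : Prop :=
  forall k t v y, length v = k -> beval e k t v = S y -> eval e v y.

Lemma beval_sound_evals gs k t v : Forall beval_sound_at gs ->
  length v = k -> all_pos (map (fun g => beval g k t v) gs) <> 0 ->
  evals gs v (map (fun g => pred (beval g k t v)) gs).
Proof.
  intros H Hv. induction H as [|g gs Hg _ IH]; simpl; intros Hz; constructor.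
  - destruct (beval g k t v) eqn:E; simpl in Hz; [lia|]. eapply Hg; eauto.
  - apply IH. destruct (beval g k t v); simpl in Hz; lia.
Qed.

Lemma beval_sound e : beval_sound_at e.
Proof.
  induction e using prf_nested_ind; intros k t v y Hv HF.
  - injection HF as <-. constructor.
  - destruct k; [discriminate|]. destruct v; [discriminate|].
    injection HF as <-. constructor.
  - simpl in HF. destruct (Nat.ltb_spec i k); [|discriminate]. injection HF as <-.
    constructor. apply nth_error_nth'. lia.
  - simpl in HF. pose proof (all_pos_01 (map (fun g => beval g k t v) gs)) as [E|E];
      rewrite E in HF; [discriminate|].
    econstructor.
    + apply (beval_sound_evals _ k t); auto. rewrite E. discriminate.
    + apply (IHe (length gs) t); [rewrite length_map; auto | lia].
  - destruct k as [|k']; [discriminate|].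
    destruct v as [|n w]; simpl in Hv; [discriminate|]. injection Hv as Hv.
    revert y HF. induction n; intros y HF.
    + rewrite beval_prim_0 in HF. constructor. eapply IHe1; eauto.
    + rewrite beval_prim_S in HF by auto.
      destruct (beval (PPrim e1 e2) (S k') t (n :: w)) eqn:E; simpl in HF; [discriminate|].
      econstructor; [apply IHn; reflexivity|]. eapply IHe2; [|rewrite Nat.add_0_r in HF; exact HF].
      simpl. lia.
  - rewrite beval_mu in HF.
    destruct (mu_search e k t v t) as [|[|y']] eqn:EG; simpl in HF; try discriminate.
    injection HF as <-. destruct (proj2 (mu_search_spec e k t v Hv t) y' EG) as (_ & A & B).
    constructor; [eapply IHe; [|exact A]; simpl; lia|].
    intros m Hm. destruct (B m Hm) as [q Hq]. exists q. eapply IHe; [|exact Hq]. simpl; lia.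
Qed.

Definition eventually (P : nat -> Prop) : Prop := exists T, forall t, T <= t -> P t.

Lemma eventually_and P Q : eventually P -> eventually Q -> eventually (fun t => P t /\ Q t).
Proof. intros [T1 H1] [T2 H2]. exists (T1 + T2). intros t Ht. split; [apply H1 | apply H2]; lia. Qed.

Lemma eventually_forall_lt (Q : nat -> nat -> Prop) n :
  (forall m, m < n -> eventually (Q m)) -> eventually (fun t => forall m, m < n -> Q m t).
Proof.
  induction n as [|n IH]; intros H.
  - exists 0. intros; lia.
  - destruct (eventually_and _ _ (IH ltac:(auto)) (H n ltac:(lia))) as [T HT].
    exists T. intros t Ht m Hm. destruct (HT t Ht) as [H1 H2].
    destruct (Nat.eq_dec m n); [subst; auto | apply H1; lia].
Qed.

Lemma eventually_mono (P Q : nat -> Prop) :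
  (forall t, P t -> Q t) -> eventually P -> eventually Q.
Proof. intros HPQ [T HT]. exists T. auto. Qed.

Lemma evals_length gs v ys : evals gs v ys -> length ys = length gs.
Proof. induction 1; simpl; auto. Qed.

Lemma beval_mu_complete f k v y : length v = k ->
  eventually (fun t => beval f (S k) t (y :: v) = 1) ->
  (forall m, m < y -> exists q, eventually (fun t => beval f (S k) t (m :: v) = S (S q))) ->
  eventually (fun t => beval (PMu f) k t v = S y).
Proof.
  intros Hv Hy Hlt.
  destruct (eventually_and _ _ Hy (eventually_forall_lt
    (fun m t => exists q, beval f (S k) t (m :: v) = S (S q)) y
    ltac:(intros m Hm; destruct (Hlt m Hm) as [q Hq];
          exact (eventually_mono _ _ (fun t H => ex_intro _ q H) Hq)))) as [T HT].
  exists (T + S y). intros t Ht. destruct (HT t ltac:(lia)) as [H0 H1].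
  assert (Hsearching : forall j, j <= y -> mu_search f k t v j = 0).
  { induction j; intros Hj; [reflexivity|]. rewrite mu_search_S, IHj by (auto; lia).
    destruct (H1 j ltac:(lia)) as [q ->]. reflexivity. }
  assert (Hfound : forall j, S y <= j -> mu_search f k t v j = S (S y)).
  { induction j; intros Hj; [lia|]. rewrite mu_search_S by auto.
    destruct (Nat.eq_dec j y).
    - subst. rewrite Hsearching, H0 by lia. unfold mu_step; simpl; lia.
    - rewrite IHj by lia. unfold mu_step. simpl. lia. }
  rewrite beval_mu, Hfound by lia. reflexivity.
Qed.

Lemma beval_complete e : forall v y k, eval e v y -> length v = k ->
  eventually (fun t => beval e k t v = S y).
Proof.
  induction e using prf_nested_ind; intros v y k Hev Hv; subst k.
  - inversion Hev; subst. exists 0. reflexivity.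
  - inversion Hev; subst. exists 0. reflexivity.
  - inversion Hev; subst. exists 0. intros t _. simpl.
    assert (i < length v) by (apply nth_error_Some; congruence).
    destruct (Nat.ltb_spec i (length v)); [|lia]. f_equal. erewrite nth_error_nth; eauto.
  - rename H into IHgs. inversion Hev as [| | |? ? ? ys ? Hgs Hf| | |]; subst.
    assert (Hargs : eventually (fun t => map (fun g => beval g (length v) t v) gs = map S ys)).
    { clear Hf IHe Hev. induction Hgs as [|g gs v y' ys' Hg _ IH]; [exists 0; reflexivity|].
      inversion IHgs as [|? ? IHg IHgs']; subst.
      apply (eventually_mono _ _ (fun t H => f_equal2 (@cons nat) (proj1 H) (proj2 H))).
      apply eventually_and; [apply IHg; auto | apply IH; auto]. }
    apply (eventually_mono (fun t => map (fun g => beval g (length v) t v) gs = map S ys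
                                    /\ beval e (length gs) t ys = S y)).
    + intros t [H1 H2]. simpl. rewrite H1.
      replace (map (fun g => pred (beval g (length v) t v)) gs) with ys.
      * rewrite H2, all_pos_map_S. lia.
      * rewrite <- (map_map (fun g => beval g (length v) t v) pred), H1, map_map. symmetry. apply map_id.
    + apply eventually_and; [exact Hargs | apply IHe; auto]. apply (evals_length _ _ _ Hgs).
  - destruct v as [|n w]; [inversion Hev|]. revert y Hev. induction n; intros y Hev.
    + inversion Hev; subst. apply (eventually_mono (fun t => beval e1 (length w) t w = S y)).
      * auto.
      * apply IHe1; auto.
    + inversion Hev as [| | | | |? ? ? ? z ? Hprev Hstep|]; subst.
      apply (eventually_mono (fun t => beval (PPrim e1 e2) (S (length w)) t (n :: w) = S z
                                   /\ beval e2 (S (S (length w))) t (n :: z :: w) = S y)).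
      * intros t [H1 H2]. cbn [length]. rewrite beval_prim_S, H1 by auto. simpl. lia.
      * apply eventually_and; [apply IHn; auto | apply IHe2; auto].
  - inversion Hev as [| | | | | |? ? ? Hy Hlt]; subst.
    apply beval_mu_complete; [reflexivity | exact (IHe _ 0 _ Hy eq_refl)|].
    intros m Hm. destruct (Hlt m Hm) as [q Hq]. exists q. exact (IHe _ (S q) _ Hq eq_refl).
Qed.

Lemma eval_functional e : forall v y1 y2, eval e v y1 -> eval e v y2 -> y1 = y2.
Proof.
  induction e using prf_nested_ind; intros v y1 y2 H1 H2.
  - inversion H1; inversion H2; subst; auto.
  - inversion H1; inversion H2; subst. congruence.
  - inversion H1; inversion H2; subst. congruence.
  - rename H into IHgs. inversion H1 as [| | |? ? ? ys1 ? Hgs1 Hf1| | |];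
      inversion H2 as [| | |? ? ? ys2 ? Hgs2 Hf2| | |]; subst.
    assert (ys1 = ys2) as <-; [|eauto].
    clear Hf1 Hf2 H1 H2. revert ys1 ys2 Hgs1 Hgs2.
    induction IHgs; intros ys1 ys2 Hgs1 Hgs2; inversion Hgs1; inversion Hgs2; subst; auto.
    f_equal; eauto.
  - destruct v as [|n w]; [inversion H1|]. revert y1 y2 H1 H2. induction n; intros y1 y2 H1 H2.
    + inversion H1; inversion H2; subst. eauto.
    + inversion H1; inversion H2; subst. assert (z = z0) by eauto. subst. eauto.
  - inversion H1 as [| | | | | |? ? ? Hz1 Hlt1]; inversion H2 as [| | | | | |? ? ? Hz2 Hlt2]; subst.
    destruct (Nat.lt_trichotomy y1 y2) as [Hl|[Hl|Hl]]; auto.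
    + destruct (Hlt2 _ Hl) as [q Hq]. specialize (IHe _ _ _ Hz1 Hq). discriminate.
    + destruct (Hlt1 _ Hl) as [q Hq]. specialize (IHe _ _ _ Hz2 Hq). discriminate.
Qed.

Lemma halts_mu_iff h (Hh : list nat -> nat) (cond : Prop) v :
  computes h (S (length v)) Hh -> (forall j, Hh (j :: v) = 0 <-> cond) ->
  (halts (PMu h) v <-> cond).
Proof.
  intros Hc Hcond. split.
  - intros [y Hy]. inversion Hy as [| | | | | |? ? ? Hy0 _]; subst.
    apply (Hcond y). eapply eval_functional; [apply Hc; reflexivity | exact Hy0].
  - intros Hv. exists 0. constructor; [|intros; lia].
    pose proof (Hc (0 :: v) eq_refl) as H0. rewrite (proj2 (Hcond 0) Hv) in H0. exact H0.
Qed.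

(** * Labels *)

(* [label] counts down to [0] and then jumps to its argument, so it takes
   every value at arbitrarily large arguments. *)
Fixpoint label (x : nat) : nat :=
  match x with 0 => 0 | S y => nsg (label y) * S y + pred (label y) end.

Definition LABEL :=
  PPrim PZero (PComp ADD [PComp MUL [PComp NSG [PProj 1]; PComp PSucc [PProj 0]];
                          PComp PRED [PProj 1]]).
Lemma LABEL_spec : computes LABEL 1 (fun v => label (nth 0 v 0)).
Proof.
  eapply computes_ext.
  - apply computes_prim; [apply computes_zero|]. apply computes_add.
    + apply computes_mul; [apply computes_nsg | apply computes_succ]; apply computes_proj; lia.
    + apply computes_pred, computes_proj; lia.
  - intros v Hv. destruct_arg v Hv. destruct v; [|discriminate]. cbn [hd tl nth].
    induction n; cbn [primrec nth label]; congruence.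
Qed.
Lemma computes_label p k P : computes p k P -> computes (PComp LABEL [p]) k (fun v => label (P v)).
Proof. apply (computes_app1 _ label), LABEL_spec. Qed.

Lemma label_countdown x : label x = 0 -> forall i, i <= x + 1 -> label (x + 1 + i) = x + 1 - i.
Proof.
  intros H0 i. induction i; intros Hi.
  - rewrite Nat.add_0_r, Nat.add_1_r. simpl. rewrite H0. simpl. lia.
  - replace (x + 1 + S i) with (S (x + 1 + i)) by lia. cbn [label].
    rewrite IHi by lia. destruct (x + 1 - i) eqn:E; [lia|]. simpl. lia.
Qed.

Lemma label_zero_beyond N : exists x, N <= x /\ label x = 0.
Proof.
  induction N as [|N (x & Hx & H0)]; [exists 0; auto|].
  exists (x + 1 + (x + 1)). rewrite label_countdown by (auto || lia). split; lia.
Qed.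

Lemma label_beyond a N : exists y, N <= y /\ label y = a.
Proof.
  destruct (label_zero_beyond (N + a)) as (x & Hx & H0).
  exists (x + 1 + (x + 1 - a)). rewrite label_countdown by (auto || lia). split; lia.
Qed.

Definition LABEL_EQ i j := PMu (PComp NSG [PComp EQB [PComp LABEL [PProj (S i)]; PProj (S j)]]).

Lemma halts_LABEL_EQ i j v : i < length v -> j < length v ->
  (halts (LABEL_EQ i j) v <-> label (nth i v 0) = nth j v 0).
Proof.
  intros Hi Hj. apply halts_mu_iff with (Hh := fun u => nsg (b2n (label (nth (S i) u 0) =? nth (S j) u 0))).
  - apply computes_nsg, computes_eqb; [apply computes_label|]; apply computes_proj; lia.
  - intros t. simpl. destruct (Nat.eqb_spec (label (nth i v 0)) (nth j v 0)); simpl; split; congruence.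
Qed.

(** * The strict order *)

Section Order.
Variable e : prf.

Definition confirmed y p q := exists t, t <= y /\ beval e 2 t [p; q] <> 0.
Definition confirmedb y p q := sg (bsum (fun t => beval e 2 t [p; q]) (S y)).

Lemma confirmedb_spec y p q : confirmedb y p q = 1 <-> confirmed y p q.
Proof.
  unfold confirmedb, confirmed. rewrite sg_1, bsum_neq0.
  split; intros (t & ? & ?); exists t; split; auto; lia.
Qed.

Lemma confirmedb_01 y p q : confirmedb y p q = 0 \/ confirmedb y p q = 1.
Proof. apply sg_01. Qed.

Lemma confirmed_mono y y' p q : confirmed y p q -> y <= y' -> confirmed y' p q.
Proof. intros (t & ? & ?) ?. exists t; split; auto; lia. Qed.

Inductive chain (y x : nat) : nat -> Prop :=
| chain_refl : chain y x x
| chain_step w' w : chain y x w' -> w' < w -> confirmed y (label w') (label w) -> chain y x w.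

Definition sq x y := x < y /\ chain y x y.

Lemma chain_ge y x w : chain y x w -> x <= w.
Proof. induction 1; lia. Qed.

Lemma chain_inv y x w : chain y x w <->
  w = x \/ (x < w /\ exists w', w' < w /\ chain y x w' /\ confirmed y (label w') (label w)).
Proof.
  split.
  - intros H. inversion H as [|w' ? Hc]; subst; auto.
    right. split; [pose proof (chain_ge _ _ _ Hc); lia | eauto].
  - intros [->|(_ & w' & ? & ? & ?)]; [constructor | econstructor; eauto].
Qed.

Lemma chain_mono y y' x w : chain y x w -> y <= y' -> chain y' x w.
Proof. induction 1; intros Hy; econstructor; eauto using confirmed_mono. Qed.

Lemma chain_trans y x w z : chain y x w -> chain y w z -> chain y x z.
Proof. intros H1 H2. induction H2; auto. econstructor; eauto. Qed.

(* Whether [w] is reachable by a chain from [x], given that the reachable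
   [w' < w] are the set bits of [H]. *)
Definition chain_bit x y w H := b2n (w =? x) + b2n (x <? w) *
   sg (bsum (fun w' => bit H w' * confirmedb y (label w') (label w)) w).

Fixpoint chain_code x y w :=
  match w with 0 => 0 | S w => chain_code x y w + 2 ^ w * chain_bit x y w (chain_code x y w) end.

Definition sqb x y :=
  b2n (x <? y) * sg (bsum (fun w' => bit (chain_code x y y) w' * confirmedb y (label w') (label y)) y).

Lemma chain_bit_le1 x y w H : chain_bit x y w H <= 1.
Proof.
  unfold chain_bit. destruct (Nat.eqb_spec w x); destruct (Nat.ltb_spec x w); simpl; try lia.
  pose proof (sg_01 (bsum (fun w' => bit H w' * confirmedb y (label w') (label w)) w)). lia.
Qed.

Lemma chain_code_lt x y w : chain_code x y w < 2 ^ w.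
Proof.
  induction w; simpl; [lia|]. pose proof (chain_bit_le1 x y w (chain_code x y w)). nia.
Qed.

Lemma bit_add_high H w c w' : w' < w -> bit (H + 2 ^ w * c) w' = bit H w'.
Proof.
  intros Hw. unfold bit. assert (2 ^ w' <> 0) by (apply Nat.pow_nonzero; lia).
  assert (E : 2 ^ w = 2 * 2 ^ (w - w' - 1) * 2 ^ w')
    by (rewrite <- Nat.pow_succ_r', <- Nat.pow_add_r; f_equal; lia).
  rewrite E. replace (H + 2 * 2 ^ (w - w' - 1) * 2 ^ w' * c)
    with (H + 2 ^ (w - w' - 1) * c * 2 * 2 ^ w') by lia.
  rewrite Nat.div_add, Nat.Div0.mod_add by auto. reflexivity.
Qed.

Lemma bit_add_top H w c : H < 2 ^ w -> c <= 1 -> bit (H + 2 ^ w * c) w = c.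
Proof.
  intros HH Hc. unfold bit. assert (2 ^ w <> 0) by (apply Nat.pow_nonzero; lia).
  rewrite Nat.mul_comm, Nat.div_add, Nat.div_small by auto. destruct c as [|[|]]; simpl; auto; lia.
Qed.

Lemma bit_chain_code x y w w' : w' < w -> bit (chain_code x y w) w' = chain_bit x y w' (chain_code x y w').
Proof.
  induction w; intros Hw; [lia|]. simpl. destruct (Nat.eq_dec w' w).
  - subst. apply bit_add_top; [apply chain_code_lt | apply chain_bit_le1].
  - rewrite bit_add_high by lia. apply IHw. lia.
Qed.

Lemma chain_step_code x y w : x < w ->
  sg (bsum (fun w' => bit (chain_code x y w) w' * confirmedb y (label w') (label w)) w) = 1 <->
  (exists w', w' < w /\ chain_bit x y w' (chain_code x y w') = 1 /\ confirmed y (label w') (label w)).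
Proof.
  intros Hxw. rewrite sg_1, bsum_neq0. split.
  - intros (w' & Hw' & Hn). exists w'. rewrite bit_chain_code in Hn by auto.
    pose proof (chain_bit_le1 x y w' (chain_code x y w')).
    pose proof (confirmedb_01 y (label w') (label w)).
    rewrite <- confirmedb_spec. nia.
  - intros (w' & Hw' & Hc & HR). exists w'. rewrite bit_chain_code, Hc by auto.
    rewrite (proj2 (confirmedb_spec _ _ _) HR). split; [auto | lia].
Qed.

Lemma chain_bit_spec x y w : chain_bit x y w (chain_code x y w) = 1 <-> chain y x w.
Proof.
  induction w as [w IH] using lt_wf_ind. rewrite chain_inv. unfold chain_bit.
  destruct (Nat.eqb_spec w x) as [->|Hne].
  { rewrite Nat.ltb_irrefl. simpl. tauto. }
  destruct (Nat.ltb_spec x w) as [Hlt|Hge]; simpl; [|lia].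
  rewrite Nat.add_0_r, chain_step_code by auto. split.
  - intros (w' & ? & Hc & ?). right. split; auto. exists w'. rewrite <- IH; auto.
  - intros [?|(_ & w' & ? & Hc & ?)]; [lia|]. exists w'. rewrite IH; auto.
Qed.

Lemma sqb_spec x y : sqb x y = 1 <-> sq x y.
Proof.
  unfold sqb, sq. destruct (Nat.ltb_spec x y); simpl; [|lia].
  rewrite Nat.add_0_r, chain_step_code, (chain_inv y x y) by auto. split.
  - intros (w' & ? & Hc & ?). split; auto. right. split; auto. exists w'. rewrite <- chain_bit_spec; auto.
  - intros [_ [?|(_ & w' & ? & Hc & ?)]]; [lia|]. exists w'. rewrite chain_bit_spec; auto.
Qed.

Lemma sqb_01 x y : sqb x y = 0 \/ sqb x y = 1.
Proof. unfold sqb. destruct (x <? y); simpl; auto. rewrite Nat.add_0_r. apply sg_01. Qed.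

Lemma sq_irrefl x : ~ sq x x.
Proof. intros [H _]. lia. Qed.

Lemma sq_trans : transitive_rel sq.
Proof.
  intros x w y [H1 C1] [H2 C2]. split; [lia|].
  eapply chain_trans; [eapply chain_mono|]; eauto; lia.
Qed.

Definition CONFIRMEDB :=
  PComp SG [PComp (BSUM (beval_prf e 2) 2) [PComp PSucc [PProj 0]; PProj 1; PProj 2]].
Lemma CONFIRMEDB_spec : computes CONFIRMEDB 3 (fun v => confirmedb (nth 0 v 0) (nth 1 v 0) (nth 2 v 0)).
Proof.
  eapply computes_ext.
  - apply computes_sg.
    eapply computes_comp
      with (Gs := [fun v => S (nth 0 v 0); fun v => nth 1 v 0; fun v => nth 2 v 0]);
      [| reflexivity | apply BSUM_spec, beval_prf_spec].
    split_forall2; [apply computes_succ|..]; apply computes_proj; lia.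
  - intros [|y [|p [|q [|]]]] Hv; simpl in Hv; try lia. reflexivity.
Qed.
Lemma computes_confirmedb p q r k P Q R :
  computes p k P -> computes q k Q -> computes r k R ->
  computes (PComp CONFIRMEDB [p; q; r]) k (fun v => confirmedb (P v) (Q v) (R v)).
Proof. apply (computes_app3 _ confirmedb), CONFIRMEDB_spec. Qed.

(* Arguments [w' :: w :: H :: x :: y]. *)
Definition CHAIN_TERM := PComp MUL [PComp BIT [PProj 2; PProj 0];
  PComp CONFIRMEDB [PProj 4; PComp LABEL [PProj 0]; PComp LABEL [PProj 1]]].
(* Arguments [w :: H :: x :: y]. *)
Definition CHAIN_BIT := PComp ADD [PComp EQB [PProj 0; PProj 2];
  PComp MUL [PComp LTB [PProj 2; PProj 0];
    PComp SG [PComp (BSUM CHAIN_TERM 4) [PProj 0; PProj 0; PProj 1; PProj 2; PProj 3]]]].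
Definition CHAIN_CODE := PPrim PZero (PComp ADD [PProj 1; PComp MUL [PComp POW2 [PProj 0]; CHAIN_BIT]]).

Lemma CHAIN_CODE_spec : computes CHAIN_CODE 3 (fun v => chain_code (nth 1 v 0) (nth 2 v 0) (nth 0 v 0)).
Proof.
  assert (Hterm : computes CHAIN_TERM 5 (fun u => bit (nth 2 u 0) (nth 0 u 0) *
                    confirmedb (nth 4 u 0) (label (nth 0 u 0)) (label (nth 1 u 0)))).
  { apply computes_mul; [apply computes_bit | apply computes_confirmedb];
      try apply computes_label; apply computes_proj; lia. }
  eapply computes_ext.
  - apply computes_prim; [apply computes_zero|].
    apply computes_add; [apply computes_proj; lia|].
    apply computes_mul; [apply computes_pow2, computes_proj; lia|].
    apply computes_add; [apply computes_eqb; apply computes_proj; lia|].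
    apply computes_mul; [apply computes_ltb; apply computes_proj; lia|].
    apply computes_sg.
    eapply computes_comp with (Gs := [fun v => nth 0 v 0; fun v => nth 0 v 0;
      fun v => nth 1 v 0; fun v => nth 2 v 0; fun v => nth 3 v 0]);
      [split_forall2; apply computes_proj; lia | reflexivity | apply BSUM_spec, Hterm].
  - intros [|w [|x [|y [|]]]] Hv; simpl in Hv; try lia. cbn [hd tl].
    induction w; cbn [primrec chain_code]; [reflexivity|]. rewrite IHw. reflexivity.
Qed.

(* Arguments [w' :: H :: x :: y]. *)
Definition SQ_TERM := PComp MUL [PComp BIT [PProj 1; PProj 0];
  PComp CONFIRMEDB [PProj 3; PComp LABEL [PProj 0]; PComp LABEL [PProj 3]]].
Definition SQB := PComp MUL [PComp LTB [PProj 0; PProj 1];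
  PComp SG [PComp (BSUM SQ_TERM 3) [PProj 1; PComp CHAIN_CODE [PProj 1; PProj 0; PProj 1];
                                    PProj 0; PProj 1]]].

Lemma SQB_spec : computes SQB 2 (fun v => sqb (nth 0 v 0) (nth 1 v 0)).
Proof.
  assert (Hterm : computes SQ_TERM 4 (fun u => bit (nth 1 u 0) (nth 0 u 0) *
                    confirmedb (nth 3 u 0) (label (nth 0 u 0)) (label (nth 3 u 0)))).
  { apply computes_mul; [apply computes_bit | apply computes_confirmedb];
      try apply computes_label; apply computes_proj; lia. }
  eapply computes_ext.
  - apply computes_mul; [apply computes_ltb; apply computes_proj; lia|].
    apply computes_sg.
    eapply computes_comp with (Gs := [fun v => nth 1 v 0;
      fun v => chain_code (nth 0 v 0) (nth 1 v 0) (nth 1 v 0); fun v => nth 0 v 0; fun v => nth 1 v 0]);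
      [| reflexivity | apply BSUM_spec, Hterm].
    split_forall2; try (apply computes_proj; lia).
    apply (computes_app3 _ (fun a b c => chain_code b c a)); [apply CHAIN_CODE_spec|..];
      apply computes_proj; lia.
  - intros [|x [|y [|]]] Hv; simpl in Hv; try lia. reflexivity.
Qed.

Lemma sq_computable : computable_rel sq.
Proof.
  exists SQB. intros a b. pose proof (SQB_spec [a; b] eq_refl) as H. simpl in H.
  split; intros Hs.
  - rewrite <- sqb_spec in Hs. rewrite Hs in H. exact H.
  - destruct (sqb_01 a b) as [E|E]; [|rewrite sqb_spec in E; contradiction].
    rewrite E in H. exact H.
Qed.

End Order.

(** * Ideals *)

Lemma ideals_ext {R} (A B : ideals R) : (forall n, proj1_sig A n <-> proj1_sig B n) -> A = B.
Proof.
  destruct A as [P HP], B as [Q HQ]; simpl. intros H.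
  assert (P = Q) as <- by (extensionality n; apply propositional_extensionality; auto).
  f_equal. apply proof_irrelevance.
Qed.

Section Homeomorphism.
Variable prec : nat -> nat -> Prop.
Variable e : prf.
Hypothesis He : forall a b, prec a b <-> halts e [a; b].
Hypothesis Htr : transitive_rel prec.

Lemma confirmed_sound y p q : confirmed e y p q -> prec p q.
Proof.
  intros (t & _ & Ht). apply He. destruct (beval e 2 t [p; q]) as [|y'] eqn:E; [contradiction|].
  exists y'. eapply beval_sound; eauto.
Qed.

Lemma confirmed_complete p q : prec p q -> eventually (fun y => confirmed e y p q).
Proof.
  intros [y Hy]%He. destruct (beval_complete e [p; q] y 2 Hy eq_refl) as [T HT].
  exists T. intros y' Hy'. exists T. rewrite HT by lia. split; [lia | discriminate].
Qed.

Lemma chain_sound y x w : chain e y x w -> x = w \/ prec (label x) (label w).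
Proof.
  induction 1 as [|w' w _ [<-|IH] _ Hc]; auto; right; apply confirmed_sound in Hc; eauto.
Qed.

Lemma sq_sound x y : sq e x y -> prec (label x) (label y).
Proof. intros [Hlt Hc]. destruct (chain_sound _ _ _ Hc); [lia | auto]. Qed.

Lemma sq_of_confirmed x y : x < y -> confirmed e y (label x) (label y) -> sq e x y.
Proof. intros H1 H2. split; [auto | econstructor; [constructor | auto | auto]]. Qed.

Lemma ideal_unbounded J : is_ideal (sq e) J ->
  forall z, J z -> forall N, exists z', J z' /\ sq e z z' /\ N <= z'.
Proof.
  intros (_ & _ & Hdir) z Hz N. induction N as [|N (z' & Hz' & Hs & HN)].
  - destruct (Hdir z z Hz Hz) as (c & Hc & H1 & _). exists c. auto with arith.
  - destruct (Hdir z' z' Hz' Hz') as (c & Hc & H1 & _).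
    exists c. split; [auto | split; [eapply sq_trans; eauto | destruct H1; lia]].
Qed.

(* Climb in [J] beyond [x] and then beyond the stage at which
   [label x ≺ label z] is confirmed; [x] lies below that element. *)
Lemma ideal_label_closed J : is_ideal (sq e) J ->
  forall z, J z -> forall x, prec (label x) (label z) -> J x.
Proof.
  intros HJ z Hz x Hp. destruct (ideal_unbounded J HJ z Hz (S x)) as (y & Hy & Hzy & Hxy).
  assert (Hxy' : prec (label x) (label y)) by (eapply Htr; eauto using sq_sound).
  destruct (confirmed_complete _ _ Hxy') as [T HT].
  destruct (ideal_unbounded J HJ y Hy T) as (y2 & Hy2 & [Hlt Hch] & HT2).
  destruct HJ as (_ & Hlow & _). apply (Hlow y2 x); auto. split; [lia|].
  eapply chain_trans; [|exact Hch]. econstructor; [constructor | lia | apply HT; lia].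
Qed.

Definition label_preimage (I : nat -> Prop) : nat -> Prop := fun x => I (label x).
Definition label_image (J : nat -> Prop) : nat -> Prop := fun a => exists x, J x /\ label x = a.

Lemma label_preimage_ideal I : is_ideal prec I -> is_ideal (sq e) (label_preimage I).
Proof.
  intros (Hne & Hlow & Hdir). unfold label_preimage. split; [|split].
  - destruct Hne as [a Ha]. destruct (label_beyond a 0) as (x & _ & Hx). exists x. congruence.
  - intros a b Hba Ha. apply (Hlow (label a)); auto. apply sq_sound; auto.
  - intros a b Ha Hb. destruct (Hdir _ _ Ha Hb) as (c & Hc & H1 & H2).
    destruct (eventually_and _ _ (confirmed_complete _ _ H1) (confirmed_complete _ _ H2)) as [T HT].
    destruct (label_beyond c (S (a + b + T))) as (y & Hy & <-).
    exists y. destruct (HT y ltac:(lia)). split; [auto | split; apply sq_of_confirmed; auto; lia].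
Qed.

Lemma label_image_ideal J : is_ideal (sq e) J -> is_ideal prec (label_image J).
Proof.
  intros HJ. pose proof HJ as (Hne & _ & Hdir). unfold label_image. split; [|split].
  - destruct Hne as [x Hx]. exists (label x), x. auto.
  - intros a b Hba (x & Hx & <-). destruct (label_beyond b 0) as (xb & _ & <-).
    exists xb. split; [|auto]. apply (ideal_label_closed J HJ x Hx). auto.
  - intros a b (x & Hx & <-) (x' & Hx' & <-). destruct (Hdir _ _ Hx Hx') as (c & Hc & H1 & H2).
    exists (label c). split; [exists c; auto | split; apply sq_sound; auto].
Qed.

Definition to_sq (I : ideals prec) : ideals (sq e) :=
  exist _ (label_preimage (proj1_sig I)) (label_preimage_ideal _ (proj2_sig I)).
Definition of_sq (J : ideals (sq e)) : ideals prec :=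
  exist _ (label_image (proj1_sig J)) (label_image_ideal _ (proj2_sig J)).

Lemma of_sq_to_sq I : of_sq (to_sq I) = I.
Proof.
  apply ideals_ext. intros a. simpl. unfold label_image, label_preimage. split.
  - intros (x & Hx & <-). auto.
  - intros Ha. destruct (label_beyond a 0) as (x & _ & <-). eauto.
Qed.

Lemma to_sq_of_sq J : to_sq (of_sq J) = J.
Proof.
  destruct J as [J HJ]. apply ideals_ext. intros x. simpl. unfold label_image, label_preimage.
  split; [|eauto].
  intros (x' & Hx' & Hf). pose proof HJ as (_ & _ & Hdir).
  destruct (Hdir _ _ Hx' Hx') as (c & Hc & H1 & _).
  apply (ideal_label_closed J HJ c Hc). rewrite <- Hf. apply sq_sound; auto.
Qed.

Lemma to_sq_computable : computable_map to_sq.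
Proof.
  exists (LABEL_EQ 0 1). intros n [I HI]. simpl. unfold label_preimage.
  split; [intros H; exists (label n) | intros (m & Hm & HIm)];
    rewrite halts_LABEL_EQ in * by (simpl; lia); simpl in *; subst; auto.
Qed.

Lemma of_sq_computable : computable_map of_sq.
Proof.
  exists (LABEL_EQ 1 0). intros n [J HJ]. simpl. unfold label_image.
  setoid_rewrite halts_LABEL_EQ; simpl; [|lia..]. firstorder.
Qed.

End Homeomorphism.

Theorem proposition2 :
  forall prec : nat -> nat -> Prop,
    ce_rel prec -> transitive_rel prec ->
    exists sqsub : nat -> nat -> Prop,
      computable_rel sqsub /\ strict_partial_order sqsub /\
      computably_homeomorphic prec sqsub.
Proof.
  intros prec [e He] Htr. exists (sq e). split; [|split].
  - apply sq_computable.
  - split; [apply sq_irrefl | apply sq_trans].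
  - exists (to_sq prec e He Htr), (of_sq prec e He Htr). split; [|split; [|split]].
    + apply of_sq_to_sq.
    + apply to_sq_of_sq.
    + apply to_sq_computable.
    + apply of_sq_computable.
Qed.
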